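(* Let $M$ and $N$ be finite groups. (1) If $M$ and $N$ are both nonabelian, then $K(M\times N)=1$. (2) If $M$ is nonabelian and $N$ is abelian, then $K(M\times N)=K(M)$.
   Context: For $\chi\in\mathrm{Irr}(G)$, the center of $\chi$ is $Z(\chi)=\{g\in G : |\chi(g)|=\chi(1)\}$. For a nonabelian group $G$, let $\mathcal{X}_G=\{\chi\in\mathrm{Irr}(G) : Z(\chi)>Z(G)\}$ (strict containment) and define $K(G)=\bigcap_{\chi\in\mathcal{X}_G}\ker(\chi)$; if $G$ is abelian, set $K(G)=G$. *)

From mathcomp Require Import all_boot all_order all_algebra all_fingroup all_solvable all_field all_character.
Set Implicit Arguments. Unset Strict Implicit. Unset Printing Implicit Defensive.
Import GroupScope.
Local Open Scope ring_scope.

(* X_G = { chi in Irr(G) : Z(G) < Z(chi) } (strict containment), with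
   Z(chi) the library character center 'Z(chi)%CF = [set g in G | |chi g| == chi 1].
   K(G) = intersection of ker chi over X_G (as a subset of G; the empty
   intersection is G), and K(G) = G if G is abelian. *)
Definition Kgrp (gT : finGroupType) (G : {group gT}) : {set gT} :=
  (if abelian G then G
  else G :&: \bigcap_(i : Iirr G | ('Z(G) \proper 'Z('chi[G]_i)%CF)%g) cfker 'chi[G]_i)%g.

From mathcomp Require Import all_boot all_order all_algebra all_fingroup all_solvable all_field all_character.
Set Implicit Arguments. Unset Strict Implicit. Unset Printing Implicit Defensive.
Import GroupScope Order.TTheory GRing.Theory Num.Theory.

(* Irreducible characters of M x N are the products chi x psi, and since
   |chi m| <= chi 1 and |psi n| <= psi 1, the center of chi x psi is
   Z(chi) x Z(psi), while Z(M x N) = Z(M) x Z(N).  If N is nonabelian then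
   Z(N) < N = Z(1_N), so every chi x 1_N lies in X_(M x N), and symmetrically
   every 1_M x psi when M is nonabelian; the kernels of these characters are
   ker chi x N and M x ker psi, whose intersection is trivial.  If N is
   abelian, every psi is linear with Z(psi) = N, so chi x psi lies in
   X_(M x N) iff chi lies in X_M; as 1_M lies in X_M for nonabelian M, the
   second coordinate of an element of K(M x N) is killed by every psi. *)

Lemma eq_set_in (T : finType) (C A B : {set T}) :
  A \subset C -> B \subset C -> {in C, A =i B} -> A = B.
Proof.
move=> sAC sBC eqAB; apply/setP=> x.
have [/eqAB // | Cx] := boolP (x \in C).
by rewrite !(contraNF (subsetP _ x) Cx).
Qed.

Lemma setX_subset (T1 T2 : finType) (A C : {set T1}) (B D : {set T2}) :
  A != set0 -> B != set0 ->
  (setX A B \subset setX C D) = (A \subset C) && (B \subset D).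
Proof.
case/set0Pn=> a Aa /set0Pn[b Bb].
apply/idP/andP=> [sABCD | [sAC sBD]]; last exact: setXS.
split; apply/subsetP=> x Ax.
  have: (x, b) \in setX C D by rewrite (subsetP sABCD) // in_setX Ax Bb.
  by case/setXP.
have: (a, x) \in setX C D by rewrite (subsetP sABCD) // in_setX Aa Ax.
by case/setXP.
Qed.

Lemma eq_pM_le (R : numDomainType) (x y a b : R) :
  (0 <= x -> 0 <= y -> x <= a -> y <= b -> a * b != 0 ->
  (x * y == a * b) = (x == a) && (y == b))%R.
Proof.
move=> x_ge0 y_ge0 le_xa le_yb /negbTE nz_ab.
by rewrite (leif_pM x_ge0 y_ge0 (leif_eq le_xa) (leif_eq le_yb)).2 nz_ab.
Qed.

Lemma group_neq0 (gT : finGroupType) (G : {group gT}) : G :!=: set0.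
Proof. by apply/set0Pn; exists 1; apply: group1. Qed.

Lemma proper_center (gT : finGroupType) (G : {group gT}) :
  ~~ abelian G -> 'Z(G) \proper G.
Proof.
move=> nabG; rewrite properE center_sub; apply: contra nabG => sGZ.
by apply/center_idP/eqP; rewrite eqEsubset center_sub.
Qed.

Section DirectProduct.

Variables (gT1 gT2 : finGroupType) (M : {group gT1}) (N : {group gT2}).

Lemma proper_setXl (H K : {group gT1}) (L : {group gT2}) :
  (setX H L \proper setX K L) = (H \proper K).
Proof. by rewrite !properE !setX_subset ?group_neq0 ?subxx ?andbT. Qed.

Lemma proper_setXr (H : {group gT1}) (K L : {group gT2}) :
  (setX H K \proper setX H L) = (K \proper L).
Proof. by rewrite !properE !setX_subset ?group_neq0 ?subxx. Qed.

Lemma center_setX : 'Z(setX M N) = setX 'Z(M) 'Z(N).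
Proof.
have /dprodW <- := center_dprod (setX_dprod M N).
rewrite -setX_prod -morphim_pairg1 -morphim_pair1g.
rewrite !injm_center ?injm_pairg1 ?injm_pair1g ?subsetT //.
by rewrite morphim_pairg1 morphim_pair1g.
Qed.

Lemma abelian_setX : abelian (setX M N) = abelian M && abelian N.
Proof.
rewrite !(sameP center_idP eqP) center_setX !eqEsubset setXS ?center_sub //=.
by rewrite setX_subset ?group_neq0.
Qed.

End DirectProduct.

Section Characters.

Local Open Scope ring_scope.

Lemma center_sub_cfcenter_irr (gT : finGroupType) (G : {group gT}) (i : Iirr G) :
  ('Z(G) \subset 'Z('chi_i)%CF)%g.
Proof. by rewrite -cap_cfcenter_irr (bigcap_inf i). Qed.

Lemma cfcenter_lin_char (gT : finGroupType) (G : {group gT}) (xi : 'CF(G)) :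
  xi \is a linear_char -> 'Z(xi)%CF = G.
Proof.
move=> lin_xi; apply: eq_set_in (cfcenter_sub xi) (subxx _) _ => x Gx.
by rewrite char_cfcenterE ?lin_charW // normC_lin_char // lin_char1 // eqxx Gx.
Qed.

Variables (gT1 gT2 : finGroupType) (M : {group gT1}) (N : {group gT2}).

Let isom_pairg1 : isom M (setX M 1%g) (restrm (subsetT M) (@pairg1 gT1 gT2)).
Proof.
apply/isomP; split; first by rewrite injm_restrm ?injm_pairg1.
by rewrite morphim_restrm morphim_pairg1 setIid.
Qed.

Let isom_pair1g : isom N (setX 1%g N) (restrm (subsetT N) (@pair1g gT1 gT2)).
Proof.
apply/isomP; split; first by rewrite injm_restrm ?injm_pair1g.
by rewrite morphim_restrm morphim_pair1g setIid.
Qed.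

Definition setX_Iirr (t : Iirr M) (u : Iirr N) : Iirr (setX_group M N) :=
  dprod_Iirr (setX_dprod M N) (isom_Iirr isom_pairg1 t, isom_Iirr isom_pair1g u).

Lemma setX_Iirr_onto (k : Iirr (setX_group M N)) : exists t u, k = setX_Iirr t u.
Proof.
rewrite -(inv_dprod_IirrK (setX_dprod M N) k).
case: (inv_dprod_Iirr _ k) => a b.
exists (isom_Iirr (isom_sym isom_pairg1) a), (isom_Iirr (isom_sym isom_pair1g) b).
by rewrite /setX_Iirr !isom_IirrKV.
Qed.

Lemma setX_IirrE t u m n : m \in M -> n \in N ->
  'chi_(setX_Iirr t u) (m, n) = 'chi_t m * 'chi_u n.
Proof.
move=> Mm Nn.
have -> : (m, n) = ((m, 1) * (1, n))%g by congr (_, _); rewrite ?mulg1 ?mul1g.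
rewrite dprod_IirrE cfDprodE ?in_setX ?Mm ?Nn ?group1 ?set11 // !isom_IirrE.
rewrite -[(m, 1%g)]/(restrm (subsetT M) (@pairg1 gT1 gT2) m).
by rewrite -[(1%g, n)]/(restrm (subsetT N) (@pair1g gT1 gT2) n) !cfIsomE.
Qed.

Lemma setX_Iirr1 t u : 'chi_(setX_Iirr t u) 1%g = 'chi_t 1%g * 'chi_u 1%g.
Proof. exact: setX_IirrE. Qed.

Lemma cfcenter_setX_Iirr t u :
  'Z('chi_(setX_Iirr t u))%CF = setX 'Z('chi_t)%CF 'Z('chi_u)%CF.
Proof.
apply: eq_set_in (cfcenter_sub _) (setXS (cfcenter_sub _) (cfcenter_sub _)) _.
move=> [m n] /setXP[Mm Nn]; rewrite in_setX !irr_cfcenterE ?in_setX ?Mm ?Nn //.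
rewrite setX_IirrE // setX_Iirr1 normrM eq_pM_le ?normr_ge0 ?char1_ge_norm ?irr_char //.
by rewrite mulf_neq0 ?irr1_neq0.
Qed.

Lemma cfker_setX_Iirr t u :
  setX (cfker 'chi_t) (cfker 'chi_u) \subset cfker 'chi_(setX_Iirr t u).
Proof.
apply/subsetP=> -[m n] /setXP[kerm kern].
have [Mm Nn] := (subsetP (cfker_sub _) m kerm, subsetP (cfker_sub _) n kern).
by rewrite cfkerEirr inE setX_IirrE // setX_Iirr1 (cfker1 kerm) (cfker1 kern).
Qed.

Lemma cfker_setX_Iirrl t : cfker 'chi_(setX_Iirr t 0) = setX (cfker 'chi_t) N.
Proof.
apply: eq_set_in (cfker_sub _) (setXS (cfker_sub _) (subxx _)) _.
move=> [m n] /setXP[Mm Nn]; rewrite in_setX Nn andbT !cfkerEirr !inE.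
by rewrite setX_IirrE // setX_Iirr1 irr0 !cfun1E Nn group1 !mulr1.
Qed.

Lemma cfker_setX_Iirrr u : cfker 'chi_(setX_Iirr 0 u) = setX M (cfker 'chi_u).
Proof.
apply: eq_set_in (cfker_sub _) (setXS (subxx _) (cfker_sub _)) _.
move=> [m n] /setXP[Mm Nn]; rewrite in_setX Mm !cfkerEirr !inE.
by rewrite setX_IirrE // setX_Iirr1 irr0 !cfun1E Mm group1 !mul1r.
Qed.

End Characters.

Section KgrpDirectProduct.

Local Open Scope ring_scope.

Lemma KgrpP (gT : finGroupType) (G : {group gT}) x : ~~ abelian G ->
  reflect (x \in G /\ forall i, ('Z(G) \proper 'Z('chi[G]_i)%CF)%g -> x \in cfker 'chi_i)
          (x \in Kgrp G).
Proof.
rewrite /Kgrp => /negbTE->; apply: (iffP setIP) => -[Gx kerx]; split=> //.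
  by move=> i; apply: (bigcapP kerx).
by apply/bigcapP.
Qed.

Variables (gT1 gT2 : finGroupType) (M : {group gT1}) (N : {group gT2}).

Lemma Kgrp_setX_nonabelian :
  ~~ abelian M -> ~~ abelian N -> Kgrp (setX_group M N) = 1%g.
Proof.
move=> nabM nabN; have nabMN : ~~ abelian (setX M N) by rewrite abelian_setX negb_and nabM.
have inXl (t : Iirr M) :
    ('Z(setX M N) \proper 'Z('chi_(setX_Iirr t (0 : Iirr N)))%CF)%g.
  rewrite center_setX cfcenter_setX_Iirr irr0 (cfcenter_lin_char (cfun1_lin_char N)).
  apply: (@proper_sub_trans _ _ (setX 'Z(M) N)).
    by rewrite proper_setXr proper_center.
  by apply: setXS; rewrite ?center_sub_cfcenter_irr.
have inXr (u : Iirr N) :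
    ('Z(setX M N) \proper 'Z('chi_(setX_Iirr (0 : Iirr M) u))%CF)%g.
  rewrite center_setX cfcenter_setX_Iirr irr0 (cfcenter_lin_char (cfun1_lin_char M)).
  apply: (@proper_sub_trans _ _ (setX M 'Z(N))).
    by rewrite proper_setXl proper_center.
  by apply: setXS; rewrite ?center_sub_cfcenter_irr.
apply/trivgP/subsetP=> -[m n] /(KgrpP _ nabMN)[_ kerK].
have /set1P-> : m \in [1]%g.
  rewrite -(TI_cfker_irr M); apply/bigcapP=> t _.
  by have := kerK _ (inXl t); rewrite cfker_setX_Iirrl => /setXP[].
have /set1P-> : n \in [1]%g.
  rewrite -(TI_cfker_irr N); apply/bigcapP=> u _.
  by have := kerK _ (inXr u); rewrite cfker_setX_Iirrr => /setXP[].
exact: group1.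
Qed.

Lemma Kgrp_setX_abelianr :
  ~~ abelian M -> abelian N -> Kgrp (setX_group M N) = setX (Kgrp M) 1%g.
Proof.
move=> nabM abN; have nabMN : ~~ abelian (setX M N) by rewrite abelian_setX negb_and nabM.
have inX_setX (t : Iirr M) (u : Iirr N) :
    ('Z(setX M N) \proper 'Z('chi_(setX_Iirr t u))%CF)%g = ('Z(M) \proper 'Z('chi_t)%CF)%g.
  rewrite center_setX (center_idP abN) cfcenter_setX_Iirr.
  by rewrite (cfcenter_lin_char (char_abelianP N abN u)) proper_setXl.
have inX0 : ('Z(M) \proper 'Z('chi[M]_0)%CF)%g.
  by rewrite irr0 (cfcenter_lin_char (cfun1_lin_char M)) proper_center.
apply/setP=> -[m n]; rewrite in_setX; apply/(KgrpP _ nabMN)/andP.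
  case=> /setXP[Mm _] kerK; split.
    apply/(KgrpP _ nabM); split=> // t Xt.
    have := kerK (setX_Iirr t (0 : Iirr N)).
    by rewrite inX_setX cfker_setX_Iirrl => /(_ Xt)/setXP[].
  rewrite -(TI_cfker_irr N); apply/bigcapP=> u _.
  have := kerK (setX_Iirr (0 : Iirr M) u).
  by rewrite inX_setX cfker_setX_Iirrr => /(_ inX0)/setXP[].
case=> /(KgrpP _ nabM)[Mm kerKM] /set1P->; split=> [|k]; first by rewrite in_setX Mm group1.
have [t [u ->]] := setX_Iirr_onto k; rewrite inX_setX => Xt.
by apply: subsetP (cfker_setX_Iirr t u) _ _; rewrite in_setX kerKM ?group1.
Qed.

End KgrpDirectProduct.

Theorem lemma3p2 (gT1 gT2 : finGroupType) (M : {group gT1}) (N : {group gT2}) :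
  (~~ abelian M -> ~~ abelian N -> Kgrp (setX_group M N) = 1) /\
  (~~ abelian M -> abelian N -> Kgrp (setX_group M N) = setX (Kgrp M) 1).
Proof. by split; [apply: Kgrp_setX_nonabelian | apply: Kgrp_setX_abelianr]. Qed.
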